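(* Let $H\in\mathbb{R}^{n\times d}$ have rank $h$, let $\Sigma\in\mathbb{R}^{n\times n}$ be symmetric positive definite, let $y\in\mathbb{R}^n$, $J\ge 2$, and let $v_0^{(1)},\dots,v_0^{(J)}\in\mathbb{R}^d$ be an initial ensemble. Run deterministic EKI: $$v_{i+1}^{(j)}=v_i^{(j)}+\Gamma_iH^\top(H\Gamma_iH^\top+\Sigma)^{-1}(y-Hv_i^{(j)}),\quad j=1,\dots,J,\ i\ge 0,$$ where $\Gamma_i$ is the empirical covariance of $v_i^{(1)},\dots,v_i^{(J)}$. Let $\theta_i^{(j)}=Hv_i^{(j)}-y$ and let $\mathcal{P},\mathcal{Q},\mathcal{N}$ be the projectors defined in the context. Then for every particle $j=1,\dots,J$: (a) $\|\mathcal{P}\theta_i^{(j)}\|=\mathcal{O}(i^{-1/2})$ as $i\to\infty$; (b) $\mathcal{Q}\theta_i^{(j)}=\mathcal{Q}\theta_0^{(j)}$ for all $i\ge 0$; (c) $\mathcal{N}\theta_i^{(j)}=\mathcal{N}\theta_0^{(j)}$ for all $i\ge 0$.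
   Context: Empirical covariance: $\Gamma_i=\frac{1}{J-1}\sum_{j=1}^J(v_i^{(j)}-\bar v_i)(v_i^{(j)}-\bar v_i)^\top$ with $\bar v_i=\frac1J\sum_j v_i^{(j)}$. Let $r$ be the number of positive eigenvalues of the generalized eigenvalue problem $H\Gamma_0H^\top w=\delta\,\Sigma w$. Let $w_1,\dots,w_n\in\mathbb{R}^n$ be a basis of $\mathbb{R}^n$ with $w_k^\top\Sigma w_l=1$ if $k=l$ and $0$ otherwise, such that: each $w_\ell$ is a generalized eigenvector of the pencil $(H\Gamma_iH^\top,\Sigma)$ for every $i\ge0$; $w_1,\dots,w_r\in\mathsf{Ran}(\Sigma^{-1}H)$ correspond to positive eigenvalues; $w_{r+1},\dots,w_h\in\mathsf{Ran}(\Sigma^{-1}H)$ correspond to the eigenvalue zero; $w_{h+1},\dots,w_n$ form a basis of $\mathsf{Ker}(H^\top)$; and $\mathsf{span}(w_1,\dots,w_h)=\mathsf{Ran}(\Sigma^{-1}H)$. With $W=[w_1,\dots,w_n]$ and $W_{k:l}$ its columns $k$ through $l$, define $\mathcal{P}=\Sigma W_{1:r}W_{1:r}^\top$, $\mathcal{Q}=\Sigma W_{r+1:h}W_{r+1:h}^\top$, $\mathcal{N}=\Sigma W_{h+1:n}W_{h+1:n}^\top$. *)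

From HB Require Import structures.
From mathcomp Require Import all_boot all_order all_algebra.
From mathcomp Require Import reals.
Set Implicit Arguments. Unset Strict Implicit. Unset Printing Implicit Defensive.
Import Order.TTheory GRing.Theory Num.Theory.
Local Open Scope ring_scope.

Section EKI.
Variable R : realType.

Definition emp_mean (d J : nat) (v : 'I_J -> 'cV[R]_d) : 'cV[R]_d :=
  (J%:R)^-1 *: \sum_(j < J) v j.

Definition emp_cov (d J : nat) (v : 'I_J -> 'cV[R]_d) : 'M[R]_d :=
  ((J.-1)%:R)^-1 *: \sum_(j < J) ((v j - emp_mean v) *m (v j - emp_mean v)^T).

Definition eki_step (n d J : nat) (H : 'M[R]_(n, d)) (Sigma : 'M[R]_n)
  (y : 'cV[R]_n) (v : 'I_J -> 'cV[R]_d) : 'I_J -> 'cV[R]_d :=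
  fun j => v j + emp_cov v *m H^T *m invmx (H *m emp_cov v *m H^T + Sigma)
                   *m (y - H *m v j).

Definition eki (n d J : nat) (H : 'M[R]_(n, d)) (Sigma : 'M[R]_n)
  (y : 'cV[R]_n) (v0 : 'I_J -> 'cV[R]_d) (i : nat) : 'I_J -> 'cV[R]_d :=
  iter i (eki_step H Sigma y) v0.

(* keep only the columns of W whose index satisfies P (others set to 0);
   mask_cols W P *m (mask_cols W P)^T = W_{cols in P} W_{cols in P}^T *)
Definition mask_cols (m k : nat) (W : 'M[R]_(m, k)) (P : pred 'I_k) : 'M[R]_(m, k) :=
  \matrix_(a, b) (if P b then W a b else 0).

Definition spd (n : nat) (S : 'M[R]_n) : Prop :=
  S^T = S /\ forall x : 'cV[R]_n, x != 0 -> 0 < (x^T *m S *m x) 0 0.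

Definition norm2 (n : nat) (x : 'cV[R]_n) : R := Num.sqrt (\sum_(a < n) x a 0 ^+ 2).

End EKI.

(* If w is a Sigma-normalised generalised eigenvector of the pencil
   (H Gamma_i H^T, Sigma), then w^T is a left eigenvector of
   H Gamma_i H^T (H Gamma_i H^T + Sigma)^-1 with eigenvalue
   delta / (1 + delta), so one EKI step divides every residual coordinate
   a^(j) = w^T theta^(j) by 1 + delta.  Moreover delta = w^T H Gamma_i H^T w
   is the empirical variance of the a^(j).  Hence zero variance is preserved
   and the coordinates freeze (the Q-part), while a positive variance obeys
   s' = s / (1 + s)^2, so that s_i <= s_0 / (1 + 2 i s_0) and
   a_i^2 = a_0^2 s_i / s_0 = O(1/i) (the P-part).  Directions in Ker H^T do
   not see the particles at all (the N-part). *)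

From HB Require Import structures.
From mathcomp Require Import all_boot all_order all_algebra.
From mathcomp Require Import reals.
From mathcomp Require Import ring lra.
Import Order.TTheory GRing.Theory Num.Theory.
Set Implicit Arguments. Unset Strict Implicit.
Local Open Scope ring_scope.
Section EmpiricalVariance.
Variables (R : realType) (J : nat).
Implicit Types f g : 'I_J -> R.

Definition emp_var f : R :=
  (J.-1)%:R^-1 * \sum_(j < J) (f j - J%:R^-1 * \sum_(l < J) f l) ^+ 2.

Lemma emp_var_ge0 f : 0 <= emp_var f.
Proof.
by rewrite mulr_ge0 ?invr_ge0 ?ler0n ?sumr_ge0 // => j _; rewrite sqr_ge0.
Qed.

Lemma eq_emp_var f g : f =1 g -> emp_var f = emp_var g.
Proof.
move=> fg; congr (_ * _); apply: eq_bigr => j _.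
by rewrite fg (eq_bigr _ (fun l _ => fg l)).
Qed.

Lemma emp_var_shift f c : emp_var (fun j => f j + c) = emp_var f.
Proof.
congr (_ * _); case: J f => [|J'] f; first by rewrite !big_ord0.
apply: eq_bigr => j _; congr (_ ^+ 2).
rewrite big_split /= sumr_const card_ord -[c *+ _]mulr_natr mulrDr mulrCA.
by rewrite mulVf ?pnatr_eq0 // mulr1; ring.
Qed.

Lemma emp_var_scale f s : emp_var (fun j => f j * s) = s ^+ 2 * emp_var f.
Proof.
rewrite /emp_var mulrCA; congr (_ * _).
rewrite [RHS]mulr_sumr; apply: eq_bigr => j _.
by rewrite -mulr_suml; ring.
Qed.

End EmpiricalVariance.

Section VarianceDamping.
Variables (R : realType) (J : nat) (a : nat -> 'I_J -> R).
Hypothesis a_step : forall i j, a i.+1 j = a i j / (1 + emp_var (a i)).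

Local Notation s i := (emp_var (a i)).

Lemma emp_var_step i : s i.+1 = s i / (1 + s i) ^+ 2.
Proof. by rewrite (eq_emp_var (a_step i)) emp_var_scale exprVn mulrC. Qed.

Lemma emp_var0_const : s 0 = 0 -> forall i j, a i j = a 0%N j.
Proof.
move=> s0; elim=> [//|i IH] j.
by rewrite a_step (eq_emp_var IH) s0 addr0 invr1 mulr1 IH.
Qed.

Lemma sqr_emp_var_ratio i j : a i j ^+ 2 * s 0 = a 0%N j ^+ 2 * s i.
Proof.
elim: i => [|i IH]; first by rewrite mulrC.
by rewrite a_step emp_var_step expr_div_n mulrAC IH mulrA.
Qed.

Lemma emp_var_decay : 0 < s 0 ->
  forall i, 0 < s i /\ s i * (2 * i%:R * s 0 + 1) <= s 0.
Proof.
move=> s0_gt0; elim=> [|i [si_gt0 IH]].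
  by rewrite mulr0 mul0r add0r mulr1.
rewrite emp_var_step; split; first by rewrite divr_gt0 // exprn_gt0 // ltr_pwDr.
rewrite mulrAC ler_pdivrMr ?exprn_gt0 ?ltr_pwDr // -[i.+1]addn1 natrD.
rewrite -subr_ge0.
have -> : s 0 * (1 + s i) ^+ 2 - s i * (2 * (i%:R + 1) * s 0 + 1)
        = (s 0 - s i * (2 * i%:R * s 0 + 1)) + s 0 * s i ^+ 2 by ring.
by rewrite addr_ge0 ?subr_ge0 // mulr_ge0 ?sqr_ge0 ?ltW.
Qed.

Lemma sqr_decay : 0 < s 0 ->
  forall i j, a i j ^+ 2 * i%:R <= a 0%N j ^+ 2 / (2 * s 0).
Proof.
move=> s0_gt0 i j; have [si_gt0 si_le] := emp_var_decay s0_gt0 i.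
have two_i_si : 2 * i%:R * s i <= 1 by rewrite -(ler_pM2r s0_gt0) mul1r; nra.
have ratio := sqr_emp_var_ratio i j.
have a0_ge0 : 0 <= a 0%N j ^+ 2 by rewrite sqr_ge0.
rewrite ler_pdivlMr; last by rewrite mulr_gt0.
have -> : a i j ^+ 2 * i%:R * (2 * s 0) = a 0%N j ^+ 2 * (2 * i%:R * s i).
  by rewrite -[RHS]mulrCA -ratio; ring.
exact: ler_piMr.
Qed.

End VarianceDamping.

Section Covariance.
Variables (R : realType) (d J : nat).
Implicit Types v : 'I_J -> 'cV[R]_d.

Lemma trmx_emp_cov v : (emp_cov v)^T = emp_cov v.
Proof.
rewrite /emp_cov linearZ /= linear_sum /=; congr (_ *: _).
by apply: eq_bigr => j _; rewrite trmx_mul trmxK.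
Qed.

Lemma emp_cov_quad v (z : 'rV[R]_d) :
  (z *m emp_cov v *m z^T) 0 0 = emp_var (fun j => (z *m v j) 0 0).
Proof.
rewrite /emp_cov -scalemxAr -scalemxAl mxE; congr (_ * _).
rewrite mulmx_sumr mulmx_suml summxE; apply: eq_bigr => j _.
have sqr11 (x : 'M[R]_1) : (x *m x^T) 0 0 = x 0 0 ^+ 2.
  by rewrite mxE big_ord1 mxE expr2.
rewrite !mulmxA -[_ *m z^T]mulmxA -trmx_mul sqr11.
by rewrite mulmxBr /emp_mean -scalemxAr mulmx_sumr !mxE summxE.
Qed.

End Covariance.

Lemma psd_add_spd_unitmx (R : realType) (n : nat) (A S : 'M[R]_n) :
  (forall u : 'rV[R]_n, 0 <= (u *m A *m u^T) 0 0) -> spd S -> A + S \in unitmx.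
Proof.
move=> A_psd [_ S_pd]; rewrite -row_free_unit -kermx_eq0.
apply/eqP/row_matrixP => i; rewrite row0.
set u := row i _.
have uAS : u *m (A + S) = 0 by rewrite -row_mul mulmx_ker row0.
apply: contraTeq isT => u_neq0.
have := S_pd u^T; rewrite trmx_eq0 trmxK => /(_ u_neq0) uSu_gt0.
have := congr1 (fun M => (M *m u^T) 0 0) uAS.
rewrite mul0mx mulmxDr mulmxDl mxE [RHS]mxE => /eqP.
by rewrite gt_eqF // ltr_wpDl.
Qed.

Section EkiStep.
Variables (R : realType) (n d J : nat).
Variables (H : 'M[R]_(n, d)) (Sigma : 'M[R]_n) (y : 'cV[R]_n).
Implicit Types (v : 'I_J -> 'cV[R]_d) (w : 'cV[R]_n).

Definition resid_coord w v (j : 'I_J) : R := (w^T *m (H *m v j - y)) 0 0.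

Lemma obs_cov_psd v (u : 'rV[R]_n) :
  0 <= (u *m (H *m emp_cov v *m H^T) *m u^T) 0 0.
Proof. by rewrite !mulmxA -mulmxA -trmx_mul emp_cov_quad emp_var_ge0. Qed.

Lemma eigenvalue_emp_var v w dl :
  w^T *m Sigma *m w = 1%:M ->
  H *m emp_cov v *m H^T *m w = dl *: (Sigma *m w) ->
  dl = emp_var (resid_coord w v).
Proof.
move=> w_normal w_eig.
have <- : (w^T *m (H *m emp_cov v *m H^T) *m w) 0 0 = dl.
  by rewrite -mulmxA w_eig -scalemxAr mulmxA w_normal !mxE eqxx mulr1.
rewrite !mulmxA -mulmxA -[H^T *m w]trmxK trmx_mul trmxK emp_cov_quad.
rewrite -[RHS](emp_var_shift _ ((w^T *m y) 0 0)); apply: eq_emp_var => j.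
rewrite /resid_coord mulmxBr mulmxA [in RHS]mxE.
by rewrite [(- (w^T *m y)) 0 0]mxE subrK.
Qed.

Hypothesis Sigma_spd : spd Sigma.

Lemma resid_coord_eki_step v w dl :
  w^T *m Sigma *m w = 1%:M ->
  H *m emp_cov v *m H^T *m w = dl *: (Sigma *m w) ->
  forall j, resid_coord w (eki_step H Sigma y v) j
            = resid_coord w v j / (1 + emp_var (resid_coord w v)).
Proof.
move=> w_normal w_eig j; have dl_var := eigenvalue_emp_var w_normal w_eig.
rewrite -dl_var; set C := H *m emp_cov v *m H^T in w_eig *.
have C_sym : C^T = C by rewrite /C !trmx_mul trmxK trmx_emp_cov mulmxA.
have M_unit : C + Sigma \in unitmx.
  exact: psd_add_spd_unitmx (obs_cov_psd v) Sigma_spd.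
have dl1_neq0 : 1 + dl != 0 by rewrite dl_var gt_eqF // ltr_pwDl ?emp_var_ge0.
have wC : w^T *m C = dl *: (w^T *m Sigma).
  by rewrite -C_sym -trmx_mul w_eig linearZ /= trmx_mul Sigma_spd.1.
have wCM : w^T *m C *m invmx (C + Sigma) = (dl / (1 + dl)) *: w^T.
  have wM : w^T *m (C + Sigma) = (1 + dl) *: (w^T *m Sigma).
    by rewrite mulmxDr wC scalerDl scale1r addrC.
  have wS : w^T *m Sigma = (1 + dl)^-1 *: (w^T *m (C + Sigma)).
    by rewrite wM scalerA mulVf ?scale1r.
  by rewrite wC wS !scalerA -!scalemxAl -mulmxA mulmxV // mulmx1 mulrC.
rewrite /resid_coord; set th := H *m v j - y.
have -> : H *m eki_step H Sigma y v j - y = th - C *m invmx (C + Sigma) *m th.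
  by rewrite /eki_step mulmxDr !mulmxA -[y - _]opprB mulmxN addrAC.
rewrite mulmxBr (mulmxA w^T (C *m _)) (mulmxA w^T C) wCM -scalemxAl.
by rewrite !mxE; field.
Qed.

Lemma resid_coord_eki v0 w :
  w^T *m Sigma *m w = 1%:M ->
  (forall i, exists dl,
     H *m emp_cov (eki H Sigma y v0 i) *m H^T *m w = dl *: (Sigma *m w)) ->
  forall i j, resid_coord w (eki H Sigma y v0 i.+1) j
    = resid_coord w (eki H Sigma y v0 i) j
      / (1 + emp_var (resid_coord w (eki H Sigma y v0 i))).
Proof.
move=> w_normal w_eig i j; have [dl w_eig_i] := w_eig i.
by rewrite /eki iterS; apply: resid_coord_eki_step w_normal w_eig_i j.
Qed.

End EkiStep.

Section Norms.
Variable R : realType.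

Lemma normr_le_sqrt_div (x c t : R) :
  0 < t -> x ^+ 2 * t <= c -> `|x| <= Num.sqrt c / Num.sqrt t.
Proof.
move=> t_gt0 le_c.
have c_ge0 : 0 <= c by apply: le_trans le_c; rewrite mulr_ge0 ?sqr_ge0 ?ltW.
by rewrite ler_pdivlMr ?sqrtr_gt0 // -sqrtr_sqr -sqrtrM ?sqr_ge0 // ler_sqrt.
Qed.

Lemma norm2_mulmx_le p q (M : 'M[R]_(p, q)) (u : 'cV[R]_q) (B : R) :
  0 <= B -> (forall b, `|u b 0| <= B) ->
  norm2 (M *m u) <= B * Num.sqrt (\sum_a (\sum_b `|M a b|) ^+ 2).
Proof.
move=> B_ge0 u_le.
rewrite /norm2 -(ger0_norm B_ge0) -sqrtr_sqr -sqrtrM ?sqr_ge0 //.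
rewrite ler_sqrt ?mulr_ge0 ?sqr_ge0 ?sumr_ge0 // => [|a _]; last exact: sqr_ge0.
rewrite mulr_sumr; apply: ler_sum => a _.
rewrite -exprMn mulrC -real_normK ?num_real //.
rewrite ler_sqr ?nnegrE ?normr_ge0 ?mulr_ge0 ?sumr_ge0 // mxE mulr_suml.
apply: le_trans (ler_norm_sum _ _ _) _; apply: ler_sum => b _.
by rewrite normrM ler_wpM2l.
Qed.

End Norms.

Section ColumnMasks.
Variables (R : realType) (m k : nat) (W : 'M[R]_(m, k)) (P : pred 'I_k).

Lemma trmx_mask_cols_mul (x : 'cV[R]_m) :
  (mask_cols W P)^T *m x = \col_l (if P l then ((col l W)^T *m x) 0 0 else 0).
Proof.
apply/matrixP => l i; rewrite !mxE ord1; case: ifP => Pl.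
  by apply: eq_bigr => a _; rewrite !mxE Pl.
by rewrite big1 // => a _; rewrite !mxE Pl mul0r.
Qed.

Lemma col_mask_cols_submx q (K : 'M[R]_(q, m)) l :
  ((mask_cols W P)^T <= K)%MS -> P l -> ((col l W)^T <= K)%MS.
Proof.
move=> /(submx_trans (row_sub l _)) + Pl; congr (_ <= _)%MS.
by apply/rowP => a; rewrite !mxE Pl.
Qed.

Lemma mask_cols_proj_eq p (M : 'M[R]_(p, m)) (x x' : 'cV[R]_m) :
  (forall l, P l -> ((col l W)^T *m x) 0 0 = ((col l W)^T *m x') 0 0) ->
  M *m mask_cols W P *m (mask_cols W P)^T *m x
  = M *m mask_cols W P *m (mask_cols W P)^T *m x'.
Proof.
move=> xx'; rewrite -!mulmxA !trmx_mask_cols_mul; congr (_ *m (_ *m _)).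
by apply/matrixP => l i; rewrite [LHS]mxE [RHS]mxE; case: ifP => // /xx'.
Qed.

Lemma norm2_mask_cols_decay p (M : 'M[R]_(p, m)) (x : nat -> 'cV[R]_m)
    (c : 'I_k -> R) :
  (forall l i, P l -> ((col l W)^T *m x i) 0 0 ^+ 2 * i%:R <= c l) ->
  exists C, forall i, (1 <= i)%N ->
    norm2 (M *m mask_cols W P *m (mask_cols W P)^T *m x i)
    <= C / Num.sqrt i%:R.
Proof.
move=> x_decay; pose G := \sum_l Num.sqrt (c l).
exists (G * Num.sqrt (\sum_a (\sum_b `|(M *m mask_cols W P) a b|) ^+ 2)).
move=> i i_gt0; rewrite mulrAC -mulmxA.
have G_ge0 : 0 <= G by rewrite sumr_ge0 // => l _; rewrite sqrtr_ge0.
apply: norm2_mulmx_le => [|b]; first by rewrite divr_ge0 ?sqrtr_ge0.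
rewrite trmx_mask_cols_mul mxE; case: ifP => Pb; last first.
  by rewrite normr0 divr_ge0 ?sqrtr_ge0.
apply: le_trans (normr_le_sqrt_div _ (x_decay b i Pb)) _.
  by rewrite ltr0n.
rewrite ler_wpM2r ?invr_ge0 ?sqrtr_ge0 // /G (bigD1 b) //= lerDl.
by rewrite sumr_ge0 // => l _; rewrite sqrtr_ge0.
Qed.

End ColumnMasks.

Lemma orthonormal_col_form (R : realType) m n
    (W : 'M[R]_(m, n)) (S : 'M[R]_m) k :
  W^T *m S *m W = 1%:M -> (col k W)^T *m S *m col k W = 1%:M.
Proof.
move=> W_orth; apply/matrixP => i l; rewrite !ord1 tr_col -row_mul.
have -> : (row k (W^T *m S) *m col k W) 0 0 = (W^T *m S *m W) k k.
  by rewrite !mxE; apply: eq_bigr => a _; rewrite !mxE.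
by rewrite W_orth !mxE eqxx.
Qed.

Theorem theorem3p8 (R : realType) (n d J h r : nat)
  (H : 'M[R]_(n, d)) (Sigma : 'M[R]_n) (y : 'cV[R]_n)
  (v0 : 'I_J -> 'cV[R]_d) (W : 'M[R]_n) :
  \rank H = h ->
  spd Sigma ->
  (2 <= J)%N ->
  (r <= h)%N ->
  (* w_1..w_n form a basis of R^n, Sigma-orthonormal *)
  W \in unitmx ->
  W^T *m Sigma *m W = 1%:M ->
  (* each w_l is a generalized eigenvector of (H Gamma_i H^T, Sigma) for all i *)
  (forall (i : nat) (k : 'I_n), exists delta : R,
      H *m emp_cov (eki H Sigma y v0 i) *m H^T *m col k W
      = delta *: (Sigma *m col k W)) ->
  (* w_1..w_r : in Ran(Sigma^-1 H), positive eigenvalues (for Gamma_0) *)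
  (forall k : 'I_n, (k < r)%N ->
      ((col k W)^T <= (invmx Sigma *m H)^T)%MS /\
      exists2 delta : R, 0 < delta &
        H *m emp_cov v0 *m H^T *m col k W = delta *: (Sigma *m col k W)) ->
  (* w_{r+1}..w_h : in Ran(Sigma^-1 H), eigenvalue zero (for Gamma_0) *)
  (forall k : 'I_n, (r <= k)%N -> (k < h)%N ->
      ((col k W)^T <= (invmx Sigma *m H)^T)%MS /\
      H *m emp_cov v0 *m H^T *m col k W = 0) ->
  (* w_{h+1}..w_n : a basis of Ker(H^T) *)
  ((mask_cols W (fun k : 'I_n => (h <= k)%N))^T == kermx H)%MS ->
  (* span(w_1..w_h) = Ran(Sigma^-1 H) *)
  ((mask_cols W (fun k : 'I_n => (k < h)%N))^T == (invmx Sigma *m H)^T)%MS ->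
  let WP := mask_cols W (fun k : 'I_n => (k < r)%N) in
  let WQ := mask_cols W (fun k : 'I_n => (r <= k)%N && (k < h)%N) in
  let WN := mask_cols W (fun k : 'I_n => (h <= k)%N) in
  let P := Sigma *m WP *m WP^T in
  let Q := Sigma *m WQ *m WQ^T in
  let N := Sigma *m WN *m WN^T in
  let theta := fun (i : nat) (j : 'I_J) => H *m eki H Sigma y v0 i j - y in
  forall j : 'I_J,
    (exists (C : R) (N0 : nat), forall i : nat, (N0 <= i)%N ->
        norm2 (P *m theta i j) <= C / Num.sqrt (i%:R))
    /\ (forall i : nat, Q *m theta i j = Q *m theta 0%N j)
    /\ (forall i : nat, N *m theta i j = N *m theta 0%N j).
Proof.
move=> _ Sigma_spd _ _ _ W_orth W_eig W_pos W_zero W_ker _.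
move=> WP WQ WN P Q N theta j.
have w_normal k := orthonormal_col_form k W_orth.
pose a k i := resid_coord H y (col k W) (eki H Sigma y v0 i).
have a_step k : forall i j, a k i.+1 j = a k i j / (1 + emp_var (a k i)).
  exact: (resid_coord_eki Sigma_spd (w_normal k) (W_eig^~ k)).
have var0 k dl :
    H *m emp_cov v0 *m H^T *m col k W = dl *: (Sigma *m col k W) ->
    emp_var (a k 0%N) = dl.
  by move/(eigenvalue_emp_var y (w_normal k)) ->.
split; [|split].
- have a_decay (k : 'I_n) i : (k < r)%N ->
      a k i j ^+ 2 * i%:R <= a k 0%N j ^+ 2 / (2 * emp_var (a k 0%N)).
    move=> k_lt_r; have [_ [dl dl_gt0 /var0 var_dl]] := W_pos k k_lt_r.
    by apply: sqr_decay (a_step k) _ i j; rewrite var_dl.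
  have [C decay] := norm2_mask_cols_decay (P := fun k : 'I_n => (k < r)%N)
                                          (x := theta^~ j) Sigma a_decay.
  by exists C, 1%N.
- move=> i; apply: mask_cols_proj_eq => k /andP[r_le_k k_lt_h].
  apply: (emp_var0_const (a_step k)); apply: var0.
  by rewrite scale0r (W_zero k r_le_k k_lt_h).2.
- move=> i; apply: mask_cols_proj_eq => k h_le_k.
  have /sub_kermxP wH : ((col k W)^T <= kermx H)%MS.
    exact: col_mask_cols_submx (andP W_ker).1 h_le_k.
  by rewrite /theta !mulmxBr !mulmxA wH !mul0mx.
Qed.
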